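(* Let $\mathcal H$ be a family of graphs. The following are equivalent: (i) there is a constant $c=c(\mathcal H)$ such that every connected $\mathcal H$-free graph $G$ has fewer than $c$ vertices $v$ with $\alpha(G[N(v)])\ge 2$; (ii) there is a positive integer $n$ such that $\mathcal H\le \{K_n^*,\ P_n,\ K_{1,n}^*,\ K_{2,n},\ E_2+K_n,\ K_1+nP_3,\ CK_n\}$.
   Context: All graphs are finite, simple, undirected. For graphs $H_1,H_2$, write $H_1\prec H_2$ if $H_2$ contains an induced subgraph isomorphic to $H_1$. A graph $G$ is $\mathcal H$-free if no $H\in\mathcal H$ satisfies $H\prec G$. For families $\mathcal H_1,\mathcal H_2$, write $\mathcal H_1\le\mathcal H_2$ if for every $H_2\in\mathcal H_2$ there is $H_1\in\mathcal H_1$ with $H_1\prec H_2$. $N(v)$ is the neighborhood of $v$, $G[S]$ the induced subgraph, $\alpha$ the independence number (the local independence number of $v$ is $\alpha(G[N(v)])$). $K_n$, $E_n$, $P_n$ are the complete graph, edgeless graph, and path on $n$ vertices; $K_{s,t}$ is the complete bipartite graph; $nG$ is the disjoint union of $n$ copies of $G$; $G_1+G_2$ is the join (disjoint union plus all edges between $V(G_1)$ and $V(G_2)$). $K_{1,n}^*$ is obtained from the star $K_{1,n}$ by attaching a new pendant vertex to each leaf; $K_n^*$ is obtained from $K_n$ by attaching a new pendant vertex to each vertex; $CK_n$ is obtained from two disjoint copies of $K_n$ by adding a perfect matching between them. *)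

From mathcomp Require Import all_boot.
Set Implicit Arguments. Unset Strict Implicit. Unset Printing Implicit Defensive.

Record graph := Graph {
  V : finType;
  adj : rel V;
  adj_sym : symmetric adj;
  adj_irr : irreflexive adj }.

Definition sadj (T : finType) (r : rel T) : rel T :=
  fun x y => (x != y) && (r x y || r y x).
Lemma sadj_sym (T : finType) (r : rel T) : symmetric (sadj r).
Proof. by move=> x y; rewrite /sadj eq_sym orbC. Qed.
Lemma sadj_irr (T : finType) (r : rel T) : irreflexive (sadj r).
Proof. by move=> x; rewrite /sadj eqxx. Qed.
Definition sgraph (T : finType) (r : rel T) : graph :=
  @Graph T (sadj r) (@sadj_sym T r) (@sadj_irr T r).

Definition induced_sub (H1 H2 : graph) : Prop :=
  exists f : V H1 -> V H2, injective f /\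
    forall x y, adj x y = adj (f x) (f y).

Definition Hfree (HH : graph -> Prop) (G : graph) : Prop :=
  forall H, HH H -> ~ induced_sub H G.

Definition family_le (HH1 HH2 : graph -> Prop) : Prop :=
  forall H2, HH2 H2 -> exists2 H1, HH1 H1 & induced_sub H1 H2.

Definition connected (G : graph) : Prop :=
  forall x y : V G, connect (@adj G) x y.

Definition nbhd (G : graph) (v : V G) : {set V G} := [set u | adj v u].

Definition independent (G : graph) (A : {set V G}) : bool :=
  [forall x in A, forall y in A, ~~ adj x y].
Definition alpha_in (G : graph) (S : {set V G}) : nat :=
  \max_(A : {set V G} | (A \subset S) && independent A) #|A|.
Definition local_alpha (G : graph) (v : V G) : nat := alpha_in (nbhd v).

(* K_n^* : clique vertices (i,true), pendant (i,false) attached to (i,true) *)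
Definition Kstar (n : nat) : graph :=
  @sgraph ('I_n * bool)%type
    (fun x y => (x.2 && y.2 && (x.1 != y.1)) || ((x.2 != y.2) && (x.1 == y.1))).
Definition Path (n : nat) : graph :=
  @sgraph 'I_n (fun i j => (i.+1 == j :> nat)).
(* K_{1,n}^* : None = centre, Some (i,true) leaves, Some (i,false) pendants *)
Definition K1nstar (n : nat) : graph :=
  @sgraph (option ('I_n * bool))%type
    (fun x y => match x, y with
                | None, Some (_, true) => true
                | Some (i, true), Some (j, false) => i == j
                | _, _ => false end).
Definition K2n (n : nat) : graph :=
  @sgraph (bool + 'I_n)%type
    (fun x y => match x, y with inl _, inr _ => true | _, _ => false end).
Definition E2joinKn (n : nat) : graph :=
  @sgraph (bool + 'I_n)%type
    (fun x y => match x, y with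
                | inl _, inl _ => false
                | inr i, inr j => i != j
                | _, _ => true end).
Definition K1joinnP3 (n : nat) : graph :=
  @sgraph (option ('I_n * 'I_3))%type
    (fun x y => match x, y with
                | None, Some _ => true
                | Some (i, a), Some (j, b) => (i == j) && (a.+1 == b :> nat)
                | _, _ => false end).
(* CK_n : two copies of K_n joined by a perfect matching *)
Definition CK (n : nat) : graph :=
  @sgraph ('I_n * bool)%type
    (fun x y => ((x.2 == y.2) && (x.1 != y.1)) || ((x.2 != y.2) && (x.1 == y.1))).

Definition special_family (n : nat) : graph -> Prop :=
  fun H => H = Kstar n \/ H = Path n \/ H = K1nstar n \/ H = K2n n \/
           H = E2joinKn n \/ H = K1joinnP3 n \/ H = CK n.

(* (i) => (ii): for n = c + 2 each of the seven graphs is connected and has at least c vertices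
   of local independence number at least 2, so a family satisfying (i) has a member induced in
   each of them.

   (ii) => (i): call a vertex of G[S] nonsimplicial if it has two nonadjacent neighbours in S.
   For S connected and complete to a clique K, the nonsimplicial vertices of S are bounded by
   induction on n - |K|.  If |K| >= n there are none (E_2 + K_n).  Otherwise, for a nonsimplicial
   x, its nonsimplicial neighbours that remain nonsimplicial in N(x) /\ S lie in fewer than n
   components of N(x) /\ S (K_1 + nP_3), each bounded by induction with K + x; each of the others
   has a neighbour outside N[x], and Ramsey arguments on these pendant neighbours produce
   E_2 + K_n, K_{2,n}, K_n^*, CK_n or K_{1,n}^*.  So the nonsimplicial vertices induce a graph of
   bounded degree; as the interior of a shortest path of G[S] consists of nonsimplicial vertices
   and G is P_n-free, they all lie within distance n of any one of them. *)

From mathcomp Require Import all_boot zify.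
From Stdlib Require Import Classical.
Set Implicit Arguments. Unset Strict Implicit. Unset Printing Implicit Defensive.

Section Counting.
Variable T : finType.

Lemma ord_inj_of_card (X : {set T}) n : n <= #|X| ->
  exists2 f : 'I_n -> T, injective f & forall i, f i \in X.
Proof.
move=> nX; exists (fun i => enum_val (widen_ord nX i)); last by move=> i; apply: enum_valP.
by move=> i j /enum_val_inj /(congr1 val) /= /val_inj.
Qed.

Lemma leq_card_bigcup (I : finType) (P : {pred I}) (F : I -> {set T}) :
  #|\bigcup_(i in P) F i| <= \sum_(i in P) #|F i|.
Proof.
elim/big_rec2: _ => [|i m U _ leUm]; first by rewrite cards0.
by apply: leq_trans (leq_card_setU _ _).1 _; rewrite leq_add2l.
Qed.
End Counting.

Section Ramsey.
Variable T : finType.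
Implicit Types (c : rel T) (A X Y : {set T}).

Definition monochromatic c (b : bool) X := {in X &, forall x y, x != y -> c x y = b}.

Lemma monochromaticS c b X Y : Y \subset X -> monochromatic c b X -> monochromatic c b Y.
Proof. by move=> /subsetP YX mX x y /YX xX /YX yX; apply: mX. Qed.

Lemma monochromaticU1 c b v X : symmetric c -> {in X, forall x, c v x = b} ->
  monochromatic c b X -> monochromatic c b (v |: X).
Proof.
move=> csym vX mX x y /setU1P[->|xX] /setU1P[->|yX]; rewrite ?eqxx //.
- by move=> _; apply: vX.
- by move=> _; rewrite csym; apply: vX.
- exact: mX.
Qed.

Lemma ramsey c (s t : nat) A : symmetric c -> 2 ^ (s + t) <= #|A| ->
  exists b, exists2 X : {set T}, X \subset A & (if b then s else t) <= #|X| /\ monochromatic c b X.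
Proof.
move=> csym; have mono0 b : monochromatic c b set0 by move=> x y; rewrite inE.
elim: {s t}(s + t) {-2}s {-2}t (erefl (s + t)) A => [|k IH] s t est A hA.
  by exists true, set0; rewrite ?sub0set //; split; first lia.
case: s t est hA => [|s] [|t] est hA; last (have [v vA] : exists v, v \in A).
- by exists true, set0; rewrite ?sub0set.
- by exists true, set0; rewrite ?sub0set.
- by exists false, set0; rewrite ?sub0set.
- by apply/card_gt0P; apply: leq_trans hA; rewrite expn_gt0.
pose N b := [set x in A :\ v | c v x == b].
have NA b : N b \subset A by apply/subsetP => x; rewrite inE => /andP[/setD1P[]].
have vN b : v \notin N b by rewrite !inE eqxx.
have extend b X : X \subset N b -> monochromatic c b X -> monochromatic c b (v |: X).
  move=> /subsetP XN; apply: monochromaticU1 => // x /XN.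
  by rewrite inE => /andP[_ /eqP].
have cardA : #|A| <= (#|N true| + #|N false|).+1.
  rewrite (cardsD1 v A) vA add1n ltnS; apply: leq_trans (leq_card_setU _ _).1.
  by apply: subset_leq_card; apply/subsetP => x /setD1P[xv xA]; rewrite !inE xv xA; case: (c v x).
have [b hb] : exists b, 2 ^ (if b then s + t.+1 else s.+1 + t) <= #|N b|.
  case: (leqP (2 ^ (s.+1 + t)) #|N false|) => hN; first by exists false.
  exists true; rewrite /=; rewrite addSnnS in hN; rewrite addSn expnS in hA; lia.
have [est1 est2] : s + t.+1 = k /\ s.+1 + t = k by lia.
case: b hb => hb.
- have [b' [X XN [hX mX]]] := IH s t.+1 est1 (N true) hb.
  case: b' hX mX => hX mX.
  + exists true, (v |: X); first by rewrite subUset sub1set vA (subset_trans XN).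
    by rewrite cardsU1 (contra (subsetP XN v)) ?vN //; split; last exact: extend.
  + by exists false, X; rewrite ?(subset_trans XN).
- have [b' [X XN [hX mX]]] := IH s.+1 t est2 (N false) hb.
  case: b' hX mX => hX mX.
  + by exists true, X; rewrite ?(subset_trans XN).
  + exists false, (v |: X); first by rewrite subUset sub1set vA (subset_trans XN).
    by rewrite cardsU1 (contra (subsetP XN v)) ?vN //; split; last exact: extend.
Qed.

Lemma ramsey_ordered c (s t : nat) A : 2 ^ (s + t) <= #|A| ->
  exists b, exists2 X : {set T}, X \subset A & (if b then s else t) <= #|X| /\
    {in X &, forall x y, enum_rank x < enum_rank y -> c x y = b}.
Proof.
pose c' x y := if enum_rank x < enum_rank y then c x y else c y x.
have c'sym : symmetric c'.
  by move=> x y; rewrite /c'; case: ltngtP => // /val_inj/enum_rank_inj ->.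
case/(ramsey c'sym) => b [X XA [hX mX]]; exists b, X => //; split=> // x y xX yX lt.
have := mX x y xX yX; rewrite /c' lt; apply.
by apply: contraTneq lt => ->; rewrite ltnn.
Qed.

Lemma ordered_min c b X x1 : x1 \in X ->
  {in X &, forall x y, enum_rank x < enum_rank y -> c x y = b} ->
  exists2 x0, x0 \in X & {in X :\ x0, forall y, c x0 y = b}.
Proof.
move=> x1X mX; have [x0 x0X min] := @arg_minnP T x1 (mem X) (fun x => enum_rank x) x1X.
exists x0 => // y /setD1P[yx0 yX]; apply: mX => //.
by rewrite ltn_neqAle min // andbT; apply: contraNneq yx0 => /val_inj/enum_rank_inj ->.
Qed.

Lemma ordered_max c b X x1 : x1 \in X ->
  {in X &, forall x y, enum_rank x < enum_rank y -> c x y = b} ->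
  exists2 x0, x0 \in X & {in X :\ x0, forall y, c y x0 = b}.
Proof.
move=> x1X mX; have [x0 x0X max] := @arg_maxnP T x1 (mem X) (fun x => enum_rank x) x1X.
exists x0 => // y /setD1P[yx0 yX]; apply: mX => //; have /= le := max y yX.
by rewrite ltn_neqAle le andbT; apply: contraNneq yx0 => /val_inj/enum_rank_inj ->.
Qed.

End Ramsey.

Lemma induced_trans (H1 H2 H3 : graph) :
  induced_sub H1 H2 -> induced_sub H2 H3 -> induced_sub H1 H3.
Proof.
move=> [f [f_inj f_adj]] [g [g_inj g_adj]]; exists (g \o f); split; first exact: inj_comp.
by move=> x y; rewrite f_adj g_adj.
Qed.

Lemma Hfree_le (HH1 HH2 : graph -> Prop) (G : graph) :
  family_le HH1 HH2 -> Hfree HH1 G -> Hfree HH2 G.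
Proof. by move=> le G_free H /le[H1 H1_in iH1] /(induced_trans iH1); apply: G_free. Qed.

Section Graph.
Variable G : graph.
Local Notation T := (V G).
Local Notation adj := (@adj G).
Implicit Types (u v w x y : T) (S : {set T}).

Lemma adjC x y : adj x y = adj y x. Proof. exact: adj_sym. Qed.
Lemma adjxx x : adj x x = false. Proof. exact: adj_irr. Qed.
Lemma adj_neq x y : adj x y -> x != y.
Proof. by apply: contraTneq => ->; rewrite adjxx. Qed.

Lemma induced_sgraph (T' : finType) (r : rel T') (f : T' -> T) : injective f ->
  (forall a b, a != b -> adj (f a) (f b) = r a b || r b a) -> induced_sub (sgraph r) G.
Proof.
move=> f_inj f_adj; exists f; split=> // a b /=; rewrite /sadj.
by case: eqVneq => [->|ab] /=; [rewrite adjxx | rewrite f_adj].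
Qed.

Definition induced_P3 x v y := [&& adj v x, adj v y, x != y & ~~ adj x y].

Lemma two_le_local_alphaP v : reflect (exists x y, induced_P3 x v y) (2 <= local_alpha v).
Proof.
apply: (iffP idP) => [alpha2|[x [y /and4P[vx vy xy nxy]]]].
  have [/existsP[x /existsP[y P3]]|noP3] := boolP [exists x, exists y, induced_P3 x v y].
    by exists x, y.
  suff : local_alpha v <= 1 by rewrite leqNgt alpha2.
  apply/bigmax_leqP => A /andP[/subsetP AN /forall_inP indA]; rewrite leqNgt.
  apply: contra noP3 => /card_gt1P[x [y [xA yA xy]]].
  apply/existsP; exists x; apply/existsP; exists y.
  move: (AN x xA) (AN y yA) (indA x xA); rewrite !inE /induced_P3 xy => -> -> /forall_inP.
  exact.
have -> : 2 = #|[set x; y]| by rewrite cards2 xy.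
apply: (@leq_bigmax_cond _ (fun A : {set T} => (A \subset nbhd v) && independent A)).
apply/andP; split.
  by apply/subsetP => z; rewrite !inE => /orP[] /eqP ->.
apply/forall_inP => a aA; apply/forall_inP => b bA.
by move: aA bA; rewrite !inE => /orP[] /eqP -> /orP[] /eqP ->; rewrite ?adjxx // adjC.
Qed.

Definition nonsimplicial S : {set T} :=
  [set v in S | [exists x in S, exists y in S, induced_P3 x v y]].

Lemma nonsimplicialP S v : reflect (v \in S /\ exists x y, [/\ x \in S, y \in S & induced_P3 x v y])
  (v \in nonsimplicial S).
Proof.
rewrite inE; apply: (iffP andP) => [[vS /exists_inP[x xS /exists_inP[y yS P3]]]|].
  by split=> //; exists x, y.
case=> vS [x [y [xS yS P3]]]; split=> //.
by apply/exists_inP; exists x => //; apply/exists_inP; exists y.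
Qed.

Lemma nonsimplicial_sub S : nonsimplicial S \subset S.
Proof. by apply/subsetP => v /nonsimplicialP[]. Qed.

Lemma nonsimplicialT v : (v \in nonsimplicial [set: T]) = (2 <= local_alpha v).
Proof.
apply/nonsimplicialP/two_le_local_alphaP => [[_ [x [y [_ _ P3]]]]|[x [y P3]]]; first by exists x, y.
by split=> //; exists x, y.
Qed.

Definition adj_in S : rel T := fun x y => [&& x \in S, y \in S & adj x y].
Definition connected_in S := {in S &, forall x y, connect (adj_in S) x y}.

Lemma adj_in_sym S : symmetric (adj_in S).
Proof. by move=> x y; rewrite /adj_in andbCA adjC. Qed.

Lemma connected_inT : connected G -> connected_in [set: T].
Proof.
move=> cG x y _ _; rewrite (@eq_connect _ _ adj) //.
by move=> a b; rewrite /adj_in !inE.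
Qed.

Fixpoint ball S u j : {set T} :=
  if j is i.+1 then ball S u i :|: [set w in S | [exists x in ball S u i, adj x w]] else [set u].

Lemma ball_mono S u i j : i <= j -> ball S u i \subset ball S u j.
Proof.
move=> /subnK <-; elim: (j - i) => [|k IH] //=.
exact: subset_trans IH (subsetUl _ _).
Qed.

Lemma ball_sub S u j : u \in S -> ball S u j \subset S.
Proof.
move=> uS; elim: j => [|j IH] /=; first by rewrite sub1set.
by rewrite subUset IH; apply/subsetP => w; rewrite inE => /andP[].
Qed.

Lemma ball_step S u j x y : x \in ball S u j -> y \in S -> adj x y -> y \in ball S u j.+1.
Proof. by move=> xj yS xy; rewrite /= !inE yS; apply/orP; right; apply/exists_inP; exists x. Qed.

Lemma ball_path S u j x p : x \in ball S u j -> path (adj_in S) x p ->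
  last x p \in ball S u (j + size p).
Proof.
elim: p j x => [|a p IH] j x xj /=; first by rewrite addn0.
by case/andP=> /and3P[_ aS xa] pa; rewrite addnS -addSn; apply: IH (ball_step xj aS xa) pa.
Qed.

Lemma ball_connect S u v : connect (adj_in S) u v -> exists j, v \in ball S u j.
Proof.
by case/connectP => p pa ->; exists (0 + size p); apply: ball_path pa; rewrite inE.
Qed.

Lemma card_ball S u D j : u \in S -> {in S, forall x, #|[set y in S | adj x y]| <= D} ->
  #|ball S u j| <= D.+1 ^ j.
Proof.
move=> uS degD; elim: j => [|j IH] /=; first by rewrite cards1.
apply: leq_trans (leq_card_setU _ _).1 _; rewrite expnS mulSn leq_add //.
have sub : [set w in S | [exists x in ball S u j, adj x w]] \subset
           \bigcup_(x in ball S u j) [set y in S | adj x y].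
  apply/subsetP => w; rewrite inE => /andP[wS /exists_inP[x xj xw]].
  by apply/bigcupP; exists x; rewrite // inE wS.
apply: leq_trans (subset_leq_card sub) _; apply: leq_trans (leq_card_bigcup _ _) _.
apply: (@leq_trans (\sum_(x in ball S u j) D)).
  by apply: leq_sum => x xj; apply: degD; apply: subsetP (ball_sub j uS) x xj.
by rewrite sum_nat_const mulnC leq_mul2l IH orbT.
Qed.

Lemma walk_ball S u j (g : nat -> T) : g 0 = u -> (forall i, i <= j -> g i \in S) ->
  (forall i, i < j -> adj (g i) (g i.+1)) -> g j \in ball S u j.
Proof.
move=> g0 gS gadj; suff : forall i, i <= j -> g i \in ball S u i by apply.
elim=> [|i IH] ij; first by rewrite g0 inE.
by apply: ball_step (IH (ltnW ij)) (gS _ ij) (gadj _ ij).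
Qed.

Definition at_distance S u j w := w \in ball S u j /\ forall i, i < j -> w \notin ball S u i.

Lemma at_distance_exists S u j w : w \in ball S u j -> exists k, at_distance S u k w.
Proof.
move=> wj; have ex : exists j, w \in ball S u j by exists j.
case: (ex_minnP ex) => k wk kmin; exists k; split=> // i ik.
by apply/negP => /kmin; rewrite leqNgt ik.
Qed.

Lemma geodesic S u j w : u \in S -> at_distance S u j w ->
  exists g : nat -> T, [/\ g 0 = u, g j = w, forall i, i <= j -> at_distance S u i (g i)
                        & forall i, i < j -> adj (g i) (g i.+1)].
Proof.
move=> uS; elim: j w => [|j IH] w [wj wmin].
  exists (fun=> u); split=> //; first by move: wj; rewrite inE => /eqP.
  by move=> i; rewrite leqn0 => /eqP ->; split; rewrite ?inE.
have wj' : w \notin ball S u j by apply: wmin.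
have [x xj xw] : exists2 x, x \in ball S u j & adj x w.
  by move: wj wj'; rewrite /= !inE => /orP[->//|/andP[_ /exists_inP[x ? ?]]] _; exists x.
have wS : w \in S by apply: subsetP (ball_sub j.+1 uS) w wj.
have [|g [g0 gj gdist gadj]] := IH x.
  split=> // i ij; apply: contra wj' => xi.
  exact: subsetP (ball_mono S u ij) w (ball_step xi wS xw).
exists (fun i => if i == j.+1 then w else g i); split.
- by rewrite g0.
- by rewrite eqxx.
- move=> i; case: eqVneq => [-> //|ne ij]; apply: gdist.
  by rewrite -ltnS ltn_neqAle ne ij.
- move=> i ij; rewrite eqSS (ltn_eqF ij); case: eqVneq => [->|ne]; first by rewrite gj.
  by apply: gadj; rewrite ltn_neqAle ne -ltnS ij.
Qed.

Section Geodesic.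
Variables (S : {set T}) (u : T) (j : nat) (g : nat -> T).
Hypothesis uS : u \in S.
Hypothesis gdist : forall i, i <= j -> at_distance S u i (g i).
Hypothesis gadj : forall i, i < j -> adj (g i) (g i.+1).

Lemma geodesic_sub i : i <= j -> g i \in S.
Proof. by move=> ij; have [gi _] := gdist ij; apply: subsetP (ball_sub i uS) _ gi. Qed.

Lemma geodesic_neq a b : a < b -> b <= j -> g a != g b.
Proof.
move=> ab bj; have [ga _] := gdist (ltnW (leq_trans ab bj)).
by have [_ /(_ a ab)] := gdist bj; apply: contraNneq => <-.
Qed.

Lemma geodesic_nonadj a b : a.+1 < b -> b <= j -> ~~ adj (g a) (g b).
Proof.
move=> ab bj; have [ga _] := gdist (ltnW (leq_trans (ltnW ab) bj)).
have [_ /(_ _ ab)] := gdist bj; apply: contra => gab.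
exact: ball_step ga (geodesic_sub bj) gab.
Qed.

Lemma geodesic_nonsimplicial i : 0 < i < j -> g i \in nonsimplicial S.
Proof.
case/andP => i0 ij; apply/nonsimplicialP; split; first exact: geodesic_sub (ltnW ij).
exists (g i.-1), (g i.+1); split; rewrite ?geodesic_sub //; try lia.
rewrite /induced_P3 -{1}(prednK i0) adjC gadj ?gadj ?geodesic_neq ?geodesic_nonadj //=; lia.
Qed.

Lemma induced_path_geodesic m : m <= j.+1 -> induced_sub (Path m) G.
Proof.
move=> mj; have lt_j (i : 'I_m) : i <= j by rewrite -ltnS (leq_trans _ mj).
apply: (@induced_sgraph _ _ (fun i : 'I_m => g i)).
  move=> a b /eqP gab; apply: ord_inj; case: (ltngtP a b) gab => // lt; [|rewrite eq_sym];
    by rewrite (negbTE (geodesic_neq lt _)).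
move=> a b /=; rewrite -val_eqE /= => ab.
case: (eqVneq a.+1 b) => [e|ab1]; first by rewrite -e gadj // -ltnS e ltnS lt_j.
case: (eqVneq b.+1 a) => [e|ba1]; first by rewrite -e adjC gadj // -ltnS e ltnS lt_j.
apply/negbTE; case: (ltngtP a b) ab => // lt _; [|rewrite adjC]; apply: geodesic_nonadj => //; lia.
Qed.
End Geodesic.

Lemma card_nonsimplicial_le n D S : ~ induced_sub (Path n) G -> connected_in S ->
  {in nonsimplicial S, forall x, #|[set y in nonsimplicial S | adj x y]| <= D} ->
  #|nonsimplicial S| <= D.+1 ^ n.
Proof.
move=> noPath cS degD; have [->|/card_gt0P[u uB]] := posnP #|nonsimplicial S|; first by [].
have uS := subsetP (nonsimplicial_sub S) u uB.
suff sub : nonsimplicial S \subset ball (nonsimplicial S) u n.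
  exact: leq_trans (subset_leq_card sub) (card_ball n uB degD).
apply/subsetP => v vB; have vS := subsetP (nonsimplicial_sub S) v vB.
have [j0 /at_distance_exists[j dist]] := ball_connect (cS u v uS vS).
have [g [g0 gj gdist gadj]] := geodesic uS dist.
have jn : j < n.
  rewrite ltnNge; apply: contraT => /negPn nj; apply/negP => _.
  exact/noPath/(induced_path_geodesic uS gdist gadj (leq_trans nj _)).
have gB i : i <= j -> g i \in nonsimplicial S.
  move=> ij; case: (posnP i) => [->|i0]; first by rewrite g0.
  case: (ltngtP i j) ij => // [ij|->] _; last by rewrite gj.
  by apply: (geodesic_nonsimplicial uS gdist gadj); rewrite i0.
rewrite -gj; apply: subsetP (ball_mono _ _ (ltnW jn)) _ _.
exact: walk_ball g0 gB gadj.
Qed.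

Definition component S w : {set T} := [set y in S | connect (adj_in S) w y].

Lemma mem_component S w : w \in S -> w \in component S w.
Proof. by move=> wS; rewrite inE wS connect0. Qed.

Lemma component_sub S w : component S w \subset S.
Proof. by apply/subsetP => y; rewrite inE => /andP[]. Qed.

Lemma component_adj S w x y : x \in component S w -> y \in S -> adj x y -> y \in component S w.
Proof.
rewrite !inE => /andP[xS wx] yS xy; rewrite yS /=.
by apply: connect_trans wx (connect1 _); rewrite /adj_in xS yS xy.
Qed.

Lemma component_eq S w x : x \in component S w -> component S x = component S w.
Proof.
rewrite inE => /andP[_ wx]; apply/setP => z; rewrite !inE.
by rewrite (same_connect (sym_connect_sym (adj_in_sym S)) wx).
Qed.

Lemma connected_component S w : connected_in (component S w).
Proof.
move=> x y xC; rewrite -{1}(component_eq xC).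
rewrite inE => /andP[_].
case/connectP => p + ->; elim: p x xC {y} => [|a p IH] x xC /=; first by rewrite connect0.
case/andP => /and3P[_ aS xa] pa; have aC := component_adj xC aS xa.
by apply: connect_trans (connect1 _) (IH a aC pa); rewrite /adj_in xC aC xa.
Qed.

Lemma nonsimplicial_component S w : 
  nonsimplicial S :&: component S w \subset nonsimplicial (component S w).
Proof.
apply/subsetP => v; rewrite inE => /andP[/nonsimplicialP[_ [x [y [xS yS P3]]]] vC].
case/and4P: (P3) => vx vy _ _; apply/nonsimplicialP; split=> //.
by exists x, y; split=> //; apply: component_adj vC _ _.
Qed.

Lemma card_nonsimplicial_components S F :
  (forall w, w \in nonsimplicial S -> #|nonsimplicial (component S w)| <= F) ->
  #|nonsimplicial S| <= #|[set component S w | w in nonsimplicial S]| * F.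
Proof.
move=> bound; set CS := [set component S w | w in nonsimplicial S].
have sub : nonsimplicial S \subset \bigcup_(C in CS) nonsimplicial C.
  apply/subsetP => v vB; apply/bigcupP; exists (component S v); first exact: imset_f.
  apply: subsetP (nonsimplicial_component S v) _ _.
  by rewrite inE vB mem_component // (subsetP (nonsimplicial_sub S)).
apply: leq_trans (subset_leq_card sub) _; apply: leq_trans (leq_card_bigcup _ _) _.
rewrite -sum_nat_const; apply: leq_sum => _ /imsetP[w wB ->]; exact: bound.
Qed.

Definition pendant b w p := [&& adj w p, p != b & ~~ adj b p].

Lemma exists_pendant S b w : w \in nonsimplicial S -> adj b w ->
  w \notin nonsimplicial [set y in S | adj b y] -> exists p, pendant b w p.
Proof.
case/nonsimplicialP => wS [x [y [xS yS P3]]] bw /negP wB'.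
have [/existsP //|/existsPn no_pendant] := boolP [exists p, pendant b w p].
have near z : adj w z -> (z == b) || adj b z.
  by move=> wz; move: (no_pendant z); rewrite /pendant wz /= negb_and !negbK.
case/and4P: (P3) => wx wy xy nxy; have /orP[/eqP xb|bx] := near x wx.
  have /orP[/eqP yb|by'] := near y wy; first by rewrite xb yb eqxx in xy.
  by rewrite xb by' in nxy.
have /orP[/eqP yb|by'] := near y wy; first by rewrite yb adjC bx in nxy.
case: wB'; apply/nonsimplicialP; split; first by rewrite inE wS.
by exists x, y; rewrite !inE xS yS bx by'.
Qed.
End Graph.

Section Embeddings.
Variables (G : graph) (n : nat).
Local Notation T := (V G).
Local Notation adj := (@adj G).
Implicit Types (b x y : T) (k c d : 'I_n -> T).

Definition hub_map x y k (z : bool + 'I_n) : T :=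
  match z with inl h => if h then x else y | inr i => k i end.

Lemma hub_map_inj x y k : x != y -> injective k ->
  (forall i, adj (k i) x) -> (forall i, adj (k i) y) -> injective (hub_map x y k).
Proof.
move=> xy k_inj kx ky [[]|i] [[]|j] //= e; first [
  by rewrite (k_inj _ _ e) | by move: xy; rewrite e eqxx |
  by move: (kx j); rewrite e adjxx | by move: (ky j); rewrite e adjxx |
  by move: (kx i); rewrite e adjxx | by move: (ky i); rewrite e adjxx ].
Qed.

Lemma induced_hub_pair (bt : bool) x y k : x != y -> ~~ adj x y -> injective k ->
  (forall i j, i != j -> adj (k i) (k j) = bt) ->
  (forall i, adj (k i) x) -> (forall i, adj (k i) y) ->
  induced_sub (if bt then E2joinKn n else K2n n) G.
Proof.
move=> xy nxy k_inj kk kx ky.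
case: bt kk => kk; apply: induced_sgraph (hub_map_inj xy k_inj kx ky) _;
  move=> [[]|i] [[]|j] //= ne.
all: rewrite ?(adjC x (k _)) ?(adjC y (k _)) ?(adjC y x) ?kx ?ky ?(negbTE nxy) //.
all: have ij : i != j by apply: contraNneq ne => ->.
all: by rewrite kk // ij.
Qed.

Definition matching_map c d (z : 'I_n * bool) : T := if z.2 then c z.1 else d z.1.

Lemma matching_map_inj c d : injective c -> injective d -> (forall i j, c i != d j) ->
  injective (matching_map c d).
Proof.
move=> c_inj d_inj cd [i []] [j []]; rewrite /matching_map /= => e;
  rewrite ?(c_inj _ _ e) ?(d_inj _ _ e) //.
- by move: (cd i j); rewrite e eqxx.
- by move: (cd j i); rewrite e eqxx.
Qed.

Section Matching.
Variables c d : 'I_n -> T.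
Hypotheses (c_inj : injective c) (d_inj : injective d) (cd_neq : forall i j, c i != d j).
Hypothesis cd_adj : forall i, adj (c i) (d i).
Hypothesis cd_nadj : forall i j, i != j -> ~~ adj (c i) (d j).

Lemma induced_matching (gm : bool) : (forall i j, i != j -> adj (c i) (c j)) ->
  (forall i j, i != j -> adj (d i) (d j) = gm) -> induced_sub (if gm then CK n else Kstar n) G.
Proof.
move=> cc dd; case: gm dd => dd; apply: induced_sgraph (matching_map_inj c_inj d_inj cd_neq) _.
all: move=> [i []] [j []]; rewrite /matching_map xpair_eqE /= ?andbT ?andbF ?orbF => ne.
all: rewrite ?(eq_sym j i) ?orbb ?[adj (d i) (c j)]adjC.
all: try by rewrite ?cc ?dd.
all: by case: eqVneq => [->|ij]; [apply: cd_adj | apply/negbTE/cd_nadj; rewrite // eq_sym].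
Qed.

Lemma induced_star_matching b : (forall i, adj b (c i)) -> (forall i, ~~ adj b (d i)) ->
  (forall i, b != d i) -> (forall i j, i != j -> ~~ adj (c i) (c j)) ->
  (forall i j, i != j -> ~~ adj (d i) (d j)) -> induced_sub (K1nstar n) G.
Proof.
move=> bc bd bd_neq cc dd.
have b_neq z : matching_map c d z != b.
  case: z => i []; rewrite /matching_map /= eq_sym //; exact: adj_neq.
have inj : injective (fun z => if z is Some z then matching_map c d z else b).
  move=> [z|] [z'|] //= e.
  - by rewrite (matching_map_inj c_inj d_inj cd_neq e).
  - by move: (b_neq z); rewrite e eqxx.
  - by move: (b_neq z'); rewrite e eqxx.
apply: induced_sgraph inj _.
move=> [[i []]|] [[j []]|] //=; rewrite /matching_map /= => ne.
all: rewrite ?orbF ?(eq_sym j i) ?[adj (c i) b]adjC ?[adj (d i) b]adjC ?[adj (d i) (c j)]adjC.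
all: rewrite ?bc ?(negbTE (bd _)) //.
all: case: (eqVneq i j) => [<-|ij]; rewrite ?eqxx ?adjxx ?cd_adj ?(negbTE ij) //; apply/negbTE.
all: by [apply: cc | apply: dd | apply: cd_nadj | apply: cd_nadj; rewrite eq_sym].
Qed.

End Matching.

Lemma induced_cone_P3s b (f : 'I_n -> nat -> T) :
  (forall i (a : 'I_3), adj b (f i a)) -> (forall i, induced_P3 (f i 0) (f i 1) (f i 2)) ->
  (forall i j (a a' : 'I_3), i != j -> (f i a != f j a') && ~~ adj (f i a) (f j a')) ->
  induced_sub (K1joinnP3 n) G.
Proof.
move=> bf P3 sep.
have P3_adj i (a a' : 'I_3) : adj (f i a) (f i a') = (a.+1 == a') || (a'.+1 == a).
  have /and4P[f01 f12 f02 nf02] := P3 i.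
  case: a a' => [[|[|[|?]]] ?] [[|[|[|?]]] ?] //=;
    by rewrite ?adjxx ?f01 ?f12 ?(negbTE nf02) //= adjC ?f01 ?f12 ?(negbTE nf02).
have P3_neq i (a a' : 'I_3) : a != a' -> f i a != f i a'.
  have /and4P[f01 f12 f02 _] := P3 i.
  case: a a' => [[|[|[|?]]] ?] [[|[|[|?]]] ?] //= _;
    first [done | exact: adj_neq | rewrite eq_sym; first [done | exact: adj_neq]].
have f_inj : injective (fun z : option ('I_n * 'I_3) => if z is Some (i, a) then f i a else b).
  move=> [[i a]|] [[j a']|] //= e; last 2 first.
  - by move: (bf i a); rewrite e adjxx.
  - by move: (bf j a'); rewrite e adjxx.
  case: (eqVneq i j) => [eij|ij]; last by move: (sep i j a a' ij); rewrite e eqxx.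
  subst j; case: (eqVneq a a') => [-> //|aa'].
  by move: (P3_neq i a a' aa'); rewrite e eqxx.
apply: induced_sgraph f_inj _ => -[[i a]|] [[j a']|] //= ne; rewrite ?orbF ?(adjC _ b) ?bf //.
case: (eqVneq i j) => [<-|ij]; first by rewrite P3_adj.
by apply/negbTE; case/andP: (sep i j a a' ij).
Qed.
End Embeddings.

(* Three nested Ramsey bounds, one for each colouring used in [no_large_pendant_set]. *)
Definition pendant_bound n := 2 ^ (n.+1 + 2 ^ (n.+1 + 2 ^ (n + n))).

(* [m] is how many vertices the clique [K] of [card_nonsimplicial_lt] still lacks, and [D]
   bounds the degrees in the graph induced by the nonsimplicial vertices. *)
Fixpoint nonsimplicial_bound n m : nat :=
  if m is m.+1 then
    let D := 2 ^ (pendant_bound n + pendant_bound n) + n * nonsimplicial_bound n m in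
    (D.+1 ^ n).+1
  else 1.

Section SpecialFree.
Variables (G : graph) (n : nat).
Hypothesis HG : Hfree (special_family n) G.
Local Notation T := (V G).
Local Notation adj := (@adj G).
Implicit Types (b p w : T) (C K S U X Y Z : {set T}) (pf : T -> T) (F : nat).

Lemma no_hub_pair bt b p Z : p != b -> ~~ adj b p -> n <= #|Z| -> monochromatic adj bt Z ->
  {in Z, forall z, adj b z} -> {in Z, forall z, adj p z} -> False.
Proof.
move=> pb nbp nZ mZ bZ pZ; have [k k_inj kZ] := ord_inj_of_card nZ.
apply: (HG (H := if bt then E2joinKn n else K2n n)).
  by case: (bt); [do 4 right; left | do 3 right; left].
apply: (induced_hub_pair _ nbp k_inj); first by rewrite eq_sym.
- by move=> i j ij; apply: mZ; rewrite ?kZ ?(inj_eq k_inj).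
- by move=> i; rewrite adjC bZ.
- by move=> i; rewrite adjC pZ.
Qed.

Lemma no_pendant_matching bt gm b pf U : n <= #|U| -> monochromatic adj bt U ->
  monochromatic (fun w w' => adj (pf w) (pf w')) gm U -> {in U, forall w, adj b w} ->
  {in U, forall w, pendant b w (pf w)} -> {in U &, forall w w', w != w' -> ~~ adj (pf w) w'} ->
  False.
Proof.
move=> nU mU mpU bU pU sepU; have [k k_inj kU] := ord_inj_of_card nU; pose d i := pf (k i).
have kne i j : i != j -> k i != k j by rewrite (inj_eq k_inj).
have kk i j : i != j -> adj (k i) (k j) = bt by move/kne; apply: mU.
have dd i j : i != j -> adj (d i) (d j) = gm by move/kne; apply: mpU.
have [kd bd_neq bd] : [/\ forall i, adj (k i) (d i), forall i, b != d i & forall i, ~~ adj b (d i)].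
  by split=> i; case/and3P: (pU _ (kU i)); rewrite // eq_sym.
have kd' i j : i != j -> ~~ adj (k i) (d j) by move=> ij; rewrite adjC sepU ?kU // eq_sym kne.
have kd_neq i j : k i != d j by apply: contraNneq (bd j) => <-; apply: bU.
have d_inj : injective d.
  by move=> i j dij; apply: contraTeq (kd i) => ij; rewrite dij kd'.
case: (bt) kk => kk; last case: (gm) dd => dd.
- apply: (HG (H := if gm then CK n else Kstar n)); first by case: (gm); [do 6 right | left].
  exact: (induced_matching k_inj d_inj kd_neq kd kd' kk dd).
- apply: (HG (H := Kstar n)); first by left.
  apply: (@induced_matching _ _ d k d_inj k_inj _ _ _ false dd kk) => [i j|i|i j ij].
  + by rewrite eq_sym.
  + by rewrite adjC.
  + by rewrite adjC kd' // eq_sym.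
- apply: (HG (H := K1nstar n)); first by do 2 right; left.
  apply: (induced_star_matching k_inj d_inj kd_neq kd kd' _ bd bd_neq) => [i|i j ij|i j ij].
  + exact: bU (kU i).
  + by rewrite kk.
  + by rewrite dd.
Qed.

Lemma card_nonsimplicial_components_lt b S : {in S, forall y, adj b y} ->
  #|[set component S w | w in nonsimplicial S]| < n.
Proof.
move=> bS; rewrite ltnNge; apply/negP => /ord_inj_of_card[C C_inj CS].
have P3s i : exists t : T * T * T, [/\ C i = component S t.1.2, t.1.2 \in S,
    t.1.1 \in S, t.2 \in S & induced_P3 t.1.1 t.1.2 t.2].
  have /imsetP[w /nonsimplicialP[wS [x [y [xS yS P3]]]] ->] := CS i.
  by exists (x, w, y).
have [t ht] := fin_all_exists P3s; pose f i a := nth b [:: (t i).1.1; (t i).1.2; (t i).2] a.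
have fC i (a : 'I_3) : f i a \in C i.
  have [-> wS xS yS /and4P[wx wy _ _]] := ht i; have wC := mem_component wS.
  by case: a => [[|[|[|?]]] ?] //=; apply: component_adj wC _ _.
have fS i (a : 'I_3) : f i a \in S.
  by case: (ht i) (fC i a) => -> _ _ _ _ /(subsetP (component_sub _ _)).
have compf i (a : 'I_3) : component S (f i a) = C i.
  by case: (ht i) (fC i a) => -> _ _ _ _ /component_eq.
apply: (HG (H := K1joinnP3 n)); first by do 5 right; left.
apply: (@induced_cone_P3s _ _ b f) => [i a|i|i j a a' ij]; first exact: bS.
  by case: (ht i).
have Cij : C i != C j by rewrite (inj_eq C_inj).
apply/andP; split.
  by apply: contraNneq Cij => e; rewrite -(compf i a) -(compf j a') e.
apply: contra Cij => /(component_adj (mem_component (fS i a)) (fS j a'))/component_eq.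
by rewrite -(compf i a) -(compf j a') => ->.
Qed.

Lemma no_large_pendant_set bt b pf X : pendant_bound n <= #|X| -> monochromatic adj bt X ->
  {in X, forall w, adj b w} -> {in X, forall w, pendant b w (pf w)} -> False.
Proof.
move=> nX mX bX pX.
have star Y w0 : Y \subset X -> n < #|Y| -> w0 \in Y -> {in Y :\ w0, forall y, adj (pf w0) y} ->
    False.
  move=> /subsetP YX nY w0Y pfY; have /and3P[_ pb nbp] := pX w0 (YX w0 w0Y).
  apply: (no_hub_pair pb nbp (Z := Y :\ w0)) pfY.
  - by rewrite (cardsD1 w0 Y) w0Y in nY.
  - by apply: monochromaticS mX; apply/subsetP => y /setD1P[_ /YX].
  - by move=> y /setD1P[_ /YX/bX].
have nonempty Y : n < #|Y| -> exists y, y \in Y by move=> /(leq_ltn_trans (leq0n n))/card_gt0P.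
have [[] [Y YX [nY mY]]] := ramsey_ordered (fun w w' => adj (pf w) w') nX.
  have [y1 y1Y] := nonempty Y nY; have [w0 w0Y pfY] := ordered_min y1Y mY.
  exact: star YX nY w0Y pfY.
have [[] [Z ZY [nZ mZ]]] := ramsey_ordered (fun w w' => adj (pf w') w) nY.
  have [z1 z1Z] := nonempty Z nZ; have [w0 w0Z pfZ] := ordered_max z1Z mZ.
  exact: star (subset_trans ZY YX) nZ w0Z pfZ.
have pf_sym : symmetric (fun w w' => adj (pf w) (pf w')) by move=> w w'; apply: adjC.
have [gm [U UZ [nU mU]]] := ramsey pf_sym nZ.
have UX : U \subset X by rewrite (subset_trans UZ) // (subset_trans ZY).
apply: (no_pendant_matching (U := U) (bt := bt) (gm := gm) (b := b) (pf := pf)).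
- by case: (gm) nU.
- exact: monochromaticS UX mX.
- exact: mU.
- by move=> w /(subsetP UX)/bX.
- by move=> w /(subsetP UX)/pX.
move=> w w' wU w'U ww'; apply/negbT; case: (ltngtP (enum_rank w) (enum_rank w')) => lt.
- by apply: mY lt; apply: subsetP (subset_trans UZ ZY) _ _.
- by apply: mZ lt; apply: subsetP UZ _ _.
- by move/val_inj/enum_rank_inj: lt ww' => ->; rewrite eqxx.
Qed.

Lemma few_pendant_neighbours b S :
  #|[set y in nonsimplicial S | adj b y] :\: nonsimplicial [set y in S | adj b y]|
    < 2 ^ (pendant_bound n + pendant_bound n).
Proof.
rewrite ltnNge; apply/negP; set W := _ :\: _ => nW.
have pendantW w : w \in W -> exists p, pendant b w p.
  by case/setDP => /setIdP[wB bw] wB'; apply: exists_pendant bw wB'.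
pose pf w := odflt w [pick p | pendant b w p].
have pfW : {in W, forall w, pendant b w (pf w)}.
  by move=> w /pendantW[p pw]; rewrite /pf; case: pickP => [//|/(_ p)]; rewrite pw.
have [bt [X XW [nX mX]]] := ramsey (@adj_sym G) nW.
apply: (no_large_pendant_set (pf := pf) (b := b) (X := X) _ mX).
- by case: (bt) nX.
- by move=> w /(subsetP XW)/setDP[/setIdP[]].
- by move=> w /(subsetP XW)/pfW.
Qed.

Lemma card_nonsimplicial_nbhd b S F :
  (forall C, C \subset [set y in S | adj b y] -> connected_in C -> #|nonsimplicial C| <= F) ->
  #|nonsimplicial [set y in S | adj b y]| <= n * F.
Proof.
move=> bound; apply: leq_trans (card_nonsimplicial_components _) _.
  by move=> w _; apply: bound; [apply: component_sub | apply: connected_component].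
rewrite leq_mul2r ltnW ?orbT // (@card_nonsimplicial_components_lt b) // => y.
by rewrite inE => /andP[].
Qed.

Lemma card_nonsimplicial_lt m K S : n <= #|K| + m -> monochromatic adj true K ->
  {in K & S, forall x y, adj x y} -> connected_in S -> #|nonsimplicial S| < nonsimplicial_bound n m.
Proof.
elim: m K S => [|m IH] K S nK mK KS cS /=.
  rewrite ltnS leqn0 cards_eq0; apply: contraT => /set0Pn[v].
  case/nonsimplicialP => _ [x [y [xS yS /and4P[_ _ xy nxy]]]]; exfalso.
  rewrite addn0 in nK; apply: (no_hub_pair _ nxy nK mK); first by rewrite eq_sym.
  - by move=> z zK; rewrite adjC KS.
  - by move=> z zK; rewrite adjC KS.
rewrite ltnS; apply: card_nonsimplicial_le cS _ => [|x xB]; first by apply: HG; right; left.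
have xS := subsetP (nonsimplicial_sub S) x xB.
have xK : x \notin K by apply/negP => xK; move: (KS x x xK xS); rewrite adjxx.
have nbhd : #|nonsimplicial [set y in S | adj x y]| <= n * nonsimplicial_bound n m.
  apply: card_nonsimplicial_nbhd => C /subsetP CS' cC; apply: ltnW.
  apply: (IH (x |: K)) cC; first by rewrite cardsU1 xK add1n addSnnS.
    by apply: monochromaticU1 (@adj_sym G) _ mK => z zK; rewrite adjC KS.
  by move=> z y /setU1P[->|zK] /CS'; rewrite inE => /andP[yS xy] //; apply: KS.
have := few_pendant_neighbours x S.
suff : #|[set y in nonsimplicial S | adj x y]| <=
  #|[set y in nonsimplicial S | adj x y] :\: nonsimplicial [set y in S | adj x y]| +
  #|nonsimplicial [set y in S | adj x y]| by lia.
apply: leq_trans (leq_card_setU _ _).1; apply/subset_leq_card/subsetP => y yN.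
by rewrite in_setU in_setD yN andbT orNb.
Qed.

Lemma card_local_alpha_lt : connected G ->
  #|[set v : T | 2 <= local_alpha v]| < nonsimplicial_bound n n.
Proof.
move=> cG; have -> : [set v : T | 2 <= local_alpha v] = nonsimplicial [set: T].
  by apply/setP => v; rewrite nonsimplicialT inE.
apply: (@card_nonsimplicial_lt n set0); rewrite ?cards0 //; last exact: connected_inT.
- by move=> x y; rewrite inE.
- by move=> x y; rewrite inE.
Qed.
End SpecialFree.

Lemma sadjE (T : finType) (r : rel T) x y : @adj (sgraph r) x y = (x != y) && (r x y || r y x).
Proof. by []. Qed.

Lemma connected_hub (H : graph) (h : V H) : (forall x, connect (@adj H) x h) -> connected H.
Proof.
move=> xh x y; apply: connect_trans (xh x) _.
by rewrite (sym_connect_sym (@adj_sym H)).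
Qed.

Lemma leq_card_local_alpha (H : graph) k (f : 'I_k -> V H) : injective f ->
  (forall i, exists x y, induced_P3 x (f i) y) -> k <= #|[set v : V H | 2 <= local_alpha v]|.
Proof.
move=> f_inj P3; rewrite -[k]card_ord -(card_imset _ f_inj); apply/subset_leq_card/subsetP.
by move=> _ /imsetP[i _ ->]; rewrite inE; apply/two_le_local_alphaP.
Qed.

Lemma pair_neq1 (A B : eqType) (a a' : A) (b b' : B) : a != a' -> (a, b) != (a', b').
Proof. by apply: contraNneq => -[->]. Qed.

Lemma pair_neq2 (A B : eqType) (a a' : A) (b b' : B) : b != b' -> (a, b) != (a', b').
Proof. by apply: contraNneq => -[_ ->]. Qed.

Section SpecialGraphs.
Variable c : nat.
(* With [c.+2] indices every index has a distinct [other] one, used in the P3 witnesses. *)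
Local Notation N := c.+2.
Let o0 : 'I_N := ord0.

Definition witness (H : graph) := connected H /\ c <= #|[set v : V H | 2 <= local_alpha v]|.
Definition other (i : 'I_N) : 'I_N := if i == o0 then ord_max else o0.

Lemma other_neq i : i != other i.
Proof. by rewrite /other; case: (eqVneq i o0) => [->|]. Qed.

Lemma Kstar_witness : witness (Kstar N).
Proof.
split.
  apply: (@connected_hub (Kstar N) (o0, true)) => -[i b].
  have h1 : connect (@adj (Kstar N)) (i, b) (i, true).
    case: b; first exact: connect0.
    by apply: connect1; rewrite sadjE /= pair_neq2 // eqxx.
  apply: connect_trans h1 _; case: (eqVneq i o0) => [->|ne]; first exact: connect0.
  by apply: connect1; rewrite sadjE /= pair_neq1 // ne.
apply: leq_trans (leqnSn _) _; apply: leq_trans (leqnSn _) _.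
apply: (@leq_card_local_alpha (Kstar N) N (fun i => (i, true))) => [i j [] //|i].
exists (i, false), (other i, true); rewrite /induced_P3 !sadjE /= pair_neq2 // eqxx.
by rewrite pair_neq1 ?other_neq //= pair_neq2 //= [other i == i]eq_sym orbb other_neq.
Qed.

Lemma Path_witness : witness (Path N).
Proof.
split.
  apply: (@connected_hub (Path N) o0).
  suff h k (x : 'I_N) : nat_of_ord x = k -> connect (@adj (Path N)) x o0 by move=> x; exact: h.
  elim: k x => [|k IH] x hx; first by rewrite (_ : x = o0) ?connect0 //; apply: val_inj.
  have kN : k < N by move: (ltn_ord x); rewrite hx; lia.
  apply: connect_trans (connect1 _) (IH (Ordinal kN) erefl).
  rewrite sadjE /= hx eqxx orbT andbT; apply/eqP => /(congr1 (@nat_of_ord _)) /=; rewrite hx; lia.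
pose f (i : 'I_c) : 'I_N := inord i.+1.
have fE (i : 'I_c) : nat_of_ord (f i) = i.+1 by rewrite /f inordK //; move: (ltn_ord i); lia.
apply: (@leq_card_local_alpha (Path N) c f) => [i j /(congr1 (@nat_of_ord _))|i].
  by rewrite !fE => -[] /val_inj.
have iN := ltn_ord i.
have e0 : nat_of_ord (inord i : 'I_N) = i by rewrite inordK //; lia.
have e2 : nat_of_ord (inord i.+2 : 'I_N) = i.+2 by rewrite inordK //; lia.
exists (inord i), (inord i.+2); rewrite /induced_P3 !sadjE /= fE e0 e2 !eqxx /= ?orbT.
rewrite -!val_eqE /= fE e0 e2; lia.
Qed.

Lemma K1nstar_witness : witness (K1nstar N).
Proof.
split.
  apply: (@connected_hub (K1nstar N) None) => -[[i []]|]; [exact: connect1 | | exact: connect0].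
  apply: connect_trans (connect1 (_ : @adj (K1nstar N) _ (Some (i, true)))) (connect1 _) => //.
  by rewrite sadjE /= pair_neq2 //= eqxx orbT.
apply: leq_trans (leqnSn _) _; apply: leq_trans (leqnSn _) _.
apply: (@leq_card_local_alpha (K1nstar N) N (fun i => Some (i, true))) => [i j [] //|i].
by exists None, (Some (i, false)); rewrite /induced_P3 !sadjE /= !eqxx !andbT; apply/eqP => -[].
Qed.

Lemma K2n_witness : witness (K2n N).
Proof.
split.
  apply: (@connected_hub (K2n N) (inl true)) => -[[]|i]; [exact: connect0 | | exact: connect1].
  by apply: connect_trans (connect1 (_ : @adj (K2n N) _ (inr o0))) (connect1 _).
apply: leq_trans (leqnSn _) _; apply: leq_trans (leqnSn _) _.
apply: (@leq_card_local_alpha (K2n N) N inr) => [i j [] //|i].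
by exists (inl true), (inl false).
Qed.

Lemma E2joinKn_witness : witness (E2joinKn N).
Proof.
split.
  apply: (@connected_hub (E2joinKn N) (inl true)) => -[[]|i]; [exact: connect0 | | exact: connect1].
  by apply: connect_trans (connect1 (_ : @adj (E2joinKn N) _ (inr o0))) (connect1 _).
apply: leq_trans (leqnSn _) _; apply: leq_trans (leqnSn _) _.
apply: (@leq_card_local_alpha (E2joinKn N) N inr) => [i j [] //|i].
by exists (inl true), (inl false).
Qed.

Lemma K1joinnP3_witness : witness (K1joinnP3 N).
Proof.
split.
  by apply: (@connected_hub (K1joinnP3 N) None) => -[[i a]|]; [exact: connect1 | exact: connect0].
apply: leq_trans (leqnSn _) _; apply: leq_trans (leqnSn _) _.
pose a k (lt_k3 : k < 3) : 'I_3 := Ordinal lt_k3.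
apply: (@leq_card_local_alpha (K1joinnP3 N) N (fun i => Some (i, a 1 isT))) => [i j [] //|i].
exists (Some (i, a 0 isT)), (Some (i, a 2 isT)).
rewrite /induced_P3 !sadjE /= !eqxx /= !andbF !andbT.
by apply/and3P; split; apply/eqP => -[].
Qed.

Lemma CK_witness : witness (CK N).
Proof.
split.
  apply: (@connected_hub (CK N) (o0, true)) => -[i b].
  have h1 : connect (@adj (CK N)) (i, b) (i, true).
    case: b; first exact: connect0.
    by apply: connect1; rewrite sadjE /= pair_neq2 // eqxx.
  apply: connect_trans h1 _; case: (eqVneq i o0) => [->|ne]; first exact: connect0.
  by apply: connect1; rewrite sadjE /= pair_neq1 // ne.
apply: leq_trans (leqnSn _) _; apply: leq_trans (leqnSn _) _.
apply: (@leq_card_local_alpha (CK N) N (fun i => (i, true))) => [i j [] //|i].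
exists (i, false), (other i, true); rewrite /induced_P3 !sadjE /= pair_neq2 // eqxx.
by rewrite pair_neq1 ?other_neq //= pair_neq2 //= [other i == i]eq_sym orbb other_neq.
Qed.
Lemma special_family_witness H : special_family N H -> witness H.
Proof.
case=> [->|[->|[->|[->|[->|[->|->]]]]]].
- exact: Kstar_witness.
- exact: Path_witness.
- exact: K1nstar_witness.
- exact: K2n_witness.
- exact: E2joinKn_witness.
- exact: K1joinnP3_witness.
- exact: CK_witness.
Qed.
End SpecialGraphs.

Theorem theorem1p5 (HH : graph -> Prop) :
  (exists c : nat, forall G : graph, connected G -> Hfree HH G ->
      #|[set v : V G | 2 <= local_alpha v]| < c)
  <->
  (exists n : nat, 0 < n /\ family_le HH (special_family n)).
Proof.
split=> [[c bound]|[n [_ le]]].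
  exists c.+2; split=> // H sH; apply: NNPP => no_sub.
  have H_free : Hfree HH H by move=> H1 HH1 iH1; apply: no_sub; exists H1.
  have [cH many] := special_family_witness sH.
  by have := bound H cH H_free; rewrite ltnNge many.
exists (nonsimplicial_bound n n) => G cG G_free.
exact: card_local_alpha_lt (Hfree_le le G_free) cG.
Qed.
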